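(* Let $g:\{\pm1\}^{m_1}\times\{\pm1\}^{m_2}\to\{\pm1\}$ and $g':\{\pm1\}^{m_1'}\times\{\pm1\}^{m_2'}\to\{\pm1\}$ be gadgets such that $\hat g(S,T)=0$ whenever $S=\emptyset$ or $T=\emptyset$, and likewise for $g'$. Then for all $k,d,n$, $$L_{1,k}(g,d,m_1,m_2,n)\le 2^{(m_1+m_2+m_1'+m_2')k/2}\,L_{1,k}(g',d,m_1',m_2',n).$$
   Context: $\hat g(S,T)=\mathbb{E}[g(\mathbf{x},\mathbf{y})\prod_{j\in S}\mathbf{x}_j\prod_{j\in T}\mathbf{y}_j]$ for uniform $\mathbf{x},\mathbf{y}$. For a randomized two-party protocol $\mathcal{C}:(\{\pm1\}^{m_1})^n\times(\{\pm1\}^{m_2})^n\to[-1,1]$ (value = expected output over internal randomness; inputs are $n$ blocks $x_i\in\{\pm1\}^{m_1}$, $y_i\in\{\pm1\}^{m_2}$), its $g$-fiber is $\mathcal{C}_{\downarrow g}(z)=\mathbb{E}[\mathcal{C}(\mathbf{x},\mathbf{y})\mid g(\mathbf{x}_i,\mathbf{y}_i)=z_i\ \forall i]$ for uniform $\mathbf{x},\mathbf{y}$. For $f:\{\pm1\}^n\to\mathbb{R}$, $L_{1,k}(f)=\sum_{|I|=k}|\hat f(I)|$. $L_{1,k}(g,d,m_1,m_2,n)$ denotes the supremum of $L_{1,k}(\mathcal{C}_{\downarrow g})$ over all such randomized protocols with at most $d$ bits of communication (and analogously for $g'$). *)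

From HB Require Import structures.
From mathcomp Require Import all_boot all_order all_algebra.
From mathcomp Require Import classical_sets reals.
Set Implicit Arguments. Unset Strict Implicit. Unset Printing Implicit Defensive.
Import Order.TTheory GRing.Theory Num.Theory.
Local Open Scope ring_scope.

(* {±1} encoded by bool: false ↦ +1, true ↦ -1. *)
Definition pm {R : pzRingType} (b : bool) : R := if b then -1 else 1.

Definition cube (m : nat) := {ffun 'I_m -> bool}.

Definition gadget (m1 m2 : nat) := cube m1 -> cube m2 -> bool.

Definition ghat {R : numFieldType} (m1 m2 : nat) (g : gadget m1 m2)
  (S : {set 'I_m1}) (T : {set 'I_m2}) : R :=
  (2 ^+ (m1 + m2))^-1 *
  \sum_(x : cube m1) \sum_(y : cube m2)
     pm (g x y) * (\prod_(j in S) pm (x j)) * (\prod_(j in T) pm (y j)).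

(* Deterministic two-party protocol trees: each internal node is a one-bit
   message sent by Alice (a function of her input) or by Bob (a function of
   his input); the position in the tree encodes the transcript. *)
Inductive proto (X Y : Type) : Type :=
| PLeaf of bool
| PAlice of (X -> bool) & proto X Y & proto X Y
| PBob of (Y -> bool) & proto X Y & proto X Y.

Fixpoint peval (X Y : Type) (p : proto X Y) (x : X) (y : Y) : bool :=
  match p with
  | PLeaf b => b
  | PAlice f p0 p1 => if f x then peval p1 x y else peval p0 x y
  | PBob f p0 p1 => if f y then peval p1 x y else peval p0 x y
  end.

(* communication cost = number of bits on the longest path *)
Fixpoint pdepth (X Y : Type) (p : proto X Y) : nat :=
  match p with
  | PLeaf _ => 0
  | PAlice _ p0 p1 => (maxn (pdepth p0) (pdepth p1)).+1
  | PBob _ p0 p1 => (maxn (pdepth p0) (pdepth p1)).+1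
  end.

(* Randomized protocol: a finitely supported probability distribution over
   deterministic protocols (weights, protocols). *)
Definition rproto (R : Type) (X Y : Type) := seq (R * proto X Y).

Definition rproto_ok (R : numDomainType) (X Y : Type) (d : nat)
  (C : rproto R X Y) : Prop :=
  all (fun w => (0 <= w.1) && (pdepth w.2 <= d)%N) C /\
  \sum_(w <- C) w.1 = 1.

Definition rval {R : numDomainType} (X Y : Type) (C : rproto R X Y)
  (x : X) (y : Y) : R :=
  \sum_(w <- C) w.1 * pm (peval w.2 x y).

Definition blocks (n m : nat) := {ffun 'I_n -> cube m}.

Definition fiber (R : numFieldType) (m1 m2 n : nat) (g : gadget m1 m2)
  (C : rproto R (blocks n m1) (blocks n m2)) (z : cube n) : R :=
  (\sum_(x : blocks n m1) \sum_(y : blocks n m2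
          | [forall i, g (x i) (y i) == z i]) rval C x y)
  / (#|[set xy : blocks n m1 * blocks n m2
          | [forall i, g (xy.1 i) (xy.2 i) == z i]]|)%:R.

Definition fhat (R : numFieldType) (n : nat) (f : cube n -> R)
  (I : {set 'I_n}) : R :=
  (2 ^+ n)^-1 * \sum_(z : cube n) f z * \prod_(i in I) pm (z i).

Definition L1k (R : numFieldType) (n k : nat) (f : cube n -> R) : R :=
  \sum_(I : {set 'I_n} | #|I| == k) `|fhat f I|.

Definition L1k_sup {R : realType} (m1 m2 : nat) (g : gadget m1 m2)
  (d n k : nat) : R :=
  sup [set r : R | exists C : rproto R (blocks n m1) (blocks n m2),
          rproto_ok d C /\ r = L1k k (fiber g C)].

(* Since ghat g set0 set0 = 0 all g-fibers have the same size, so the Fourier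
   coefficient of the fiber of C at J is 2^-(n(m1+m2)) times the correlation of C
   with prod_(i in J) g(x_i, y_i).  Expanding each factor in the Fourier basis of g
   writes this product as an average, over tuples tau of pairs (S_i, T_i) drawn with
   probability prod_i |ghat(S_i, T_i)| / ||ghat||_1, of products of characters, at
   the price of a factor ||ghat||_1^|J|.  For every tau in the support (all S_i, T_i
   nonempty) Alice and Bob turn C into a protocol for g' of the same cost: with
   public coins they replace each g'-block by a uniformly random g-block whose parity
   on S_i (resp. T_i) is the parity of the g'-block on S' (resp. T'), where
   |ghat'(S', T')| is maximal.  As ghat' vanishes when S' or T' is empty, the
   g'-fiber of this protocol has Fourier coefficients ghat'(S', T')^|J| times those
   correlations.  Hence L_{1,k}(g) <= (||ghat||_1 / max |ghat'|)^k L_{1,k}(g'); finally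
   ||ghat||_1 <= 2^((m1+m2)/2) by Cauchy-Schwarz and Parseval, and
   max |ghat'| >= 2^(-(m1'+m2')/2) by Parseval. *)

From HB Require Import structures.
From mathcomp Require Import all_boot all_order all_algebra.
From mathcomp Require Import reals.
From mathcomp Require Import ring.
Set Implicit Arguments. Unset Strict Implicit. Unset Printing Implicit Defensive.
Import Order.TTheory GRing.Theory Num.Theory.
Local Open Scope ring_scope.

Lemma sumr_delta (R : pzSemiRingType) (T : finType) (a : T) (F : T -> R) :
  \sum_x (x == a)%:R * F x = F a.
Proof.
rewrite (bigD1 a) //= eqxx mul1r big1 ?addr0 // => x /negbTE ->.
by rewrite mul0r.
Qed.

Lemma exchange_big2 (R : nmodType) (A B C D : finType) (F : A -> B -> C -> D -> R) :
  \sum_a \sum_b \sum_c \sum_d F a b c d = \sum_c \sum_d \sum_a \sum_b F a b c d.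
Proof.
transitivity (\sum_a \sum_c \sum_d \sum_b F a b c d).
  by apply: eq_bigr => a _; rewrite exchange_big; apply: eq_bigr => c _;
     rewrite exchange_big.
rewrite exchange_big; apply: eq_bigr => c _; rewrite exchange_big.
by apply: eq_bigr => d _; rewrite exchange_big.
Qed.

Lemma natr_forall (R : comPzSemiRingType) (I : finType) (P : pred I) :
  [forall i, P i]%:R = \prod_i (P i)%:R :> R.
Proof.
have [/forallP allP | ] := boolP [forall i, P i].
  by rewrite big1 // => i _; rewrite allP.
by rewrite negb_forall => /existsP[i /negbTE Pi]; rewrite (bigD1 i) //= Pi mul0r.
Qed.

Lemma sum_ffun2_prod (R : comPzSemiRingType) (I A B : finType) (F : I -> A -> B -> R) :
  \sum_(x : {ffun I -> A}) \sum_(y : {ffun I -> B}) \prod_i F i (x i) (y i)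
  = \prod_i \sum_a \sum_b F i a b.
Proof.
transitivity (\prod_i \sum_(ab : A * B) F i ab.1 ab.2); last first.
  by apply: eq_bigr => i _; rewrite pair_big.
rewrite bigA_distr_bigA pair_big /=.
pose h (xy : {ffun I -> A} * {ffun I -> B}) := [ffun i => (xy.1 i, xy.2 i)].
rewrite (reindex h) /=.
  by apply: eq_bigr => -[x y] _; apply: eq_bigr => i _; rewrite ffunE.
exists (fun f : {ffun I -> A * B} => ([ffun i => (f i).1], [ffun i => (f i).2]))
    => [[x y] _ | f _] /=.
  by congr pair; apply/ffunP => i; rewrite !ffunE.
by apply/ffunP => i; rewrite !ffunE; case: (f i).
Qed.

Lemma natr_eq_ffun (R : comPzSemiRingType) (I : finType) (T : eqType)
    (u : {ffun I -> T}) (f : I -> T) :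
  (u == [ffun i => f i])%:R = \prod_i (u i == f i)%:R :> R.
Proof.
rewrite -natr_forall (_ : (u == _) = [forall i, u i == f i]) //.
apply/eqP/forallP => [-> i | eq_uf]; first by rewrite ffunE.
by apply/ffunP => i; rewrite ffunE; apply/eqP.
Qed.

Lemma sqr_sum_le (R : realFieldType) (I : finType) (a : I -> R) :
  (\sum_i a i) ^+ 2 <= #|I|%:R * \sum_i a i ^+ 2.
Proof.
have sum_sqr_diff : \sum_(i : I) \sum_(j : I) (a i - a j) ^+ 2 =
    2 * (#|I|%:R * \sum_i a i ^+ 2 - (\sum_i a i) ^+ 2).
  have sum_sqr_l : \sum_(i : I) \sum_(j : I) a i ^+ 2 = #|I|%:R * \sum_i a i ^+ 2.
    by rewrite exchange_big /= sumr_const mulr_natl.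
  have sum_sqr_r : \sum_(i : I) \sum_(j : I) a j ^+ 2 = #|I|%:R * \sum_i a i ^+ 2.
    by rewrite sumr_const mulr_natl.
  have sum_mul : \sum_(i : I) \sum_(j : I) a i * a j = (\sum_i a i) ^+ 2.
    by rewrite expr2 big_distrlr.
  transitivity (\sum_(i : I) \sum_(j : I) (a i ^+ 2 + a j ^+ 2 - (a i * a j) *+ 2)).
    by apply: eq_bigr => i _; apply: eq_bigr => j _; ring.
  under eq_bigr => i _ do rewrite sumrB big_split /= sumrMnl.
  by rewrite sumrB big_split /= sumrMnl sum_sqr_l sum_sqr_r sum_mul; ring.
have : 0 <= \sum_(i : I) \sum_(j : I) (a i - a j) ^+ 2.
  by apply: sumr_ge0 => i _; apply: sumr_ge0 => j _; exact: sqr_ge0.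
by rewrite sum_sqr_diff pmulr_rge0 // subr_ge0.
Qed.

Lemma expr_div_le_sqrt (R : rcfType) (w a : R) (N N' k : nat) :
  0 <= w -> 0 < a -> w ^+ 2 <= 2 ^+ N -> 1 <= 2 ^+ N' * a ^+ 2 ->
  (w / a) ^+ k <= Num.sqrt (2 ^+ ((N + N') * k)).
Proof.
move=> w_ge0 a_gt0 w_le a_ge.
have wa_ge0 : 0 <= w / a by rewrite divr_ge0 // ltW.
rewrite -(ger0_norm (exprn_ge0 k wa_ge0)) -sqrtr_sqr ler_sqrt ?exprn_ge0 ?ler0n //.
rewrite exprAC exprM lerXn2r ?nnegrE ?exprn_ge0 ?ler0n // expr_div_n exprD.
rewrite ler_pM ?invr_ge0 ?sqr_ge0 //.
by rewrite -[_^-1]mul1r ler_pdivrMr ?exprn_gt0.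
Qed.

Lemma pmE (R : pzRingType) (b : bool) : pm b = (-1) ^+ b :> R.
Proof. by case: b. Qed.

Lemma pm_addb (R : pzRingType) (a b : bool) : pm (a (+) b) = pm a * pm b :> R.
Proof. by rewrite !pmE signr_addb. Qed.

Lemma pmK (R : pzRingType) (b : bool) : pm b * pm b = 1 :> R.
Proof. by rewrite -pm_addb addbb. Qed.

Lemma normr_pm (R : numDomainType) (b : bool) : `|pm b : R| = 1.
Proof. by rewrite pmE normr_sign. Qed.

Lemma eqb_pm (R : numFieldType) (a b : bool) :
  (a == b)%:R = (1 + pm a * pm b) / 2 :> R.
Proof.
by rewrite -pm_addb -negb_add; case: (a (+) b); rewrite /pm /=; field.
Qed.

Definition chi (R : pzRingType) m (S : {set 'I_m}) (a : cube m) : R :=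
  \prod_(j in S) pm (a j).

Definition parity m (S : {set 'I_m}) (a : cube m) : bool :=
  \big[addb/false]_(j in S) a j.

Definition flip m (o : option 'I_m) (a : cube m) : cube m :=
  [ffun l => (o == Some l) (+) a l].

Lemma pm_parity (R : pzRingType) m (S : {set 'I_m}) a :
  pm (parity S a) = chi R S a.
Proof. exact: (big_morph _ (@pm_addb R)). Qed.

Lemma chi_set0 (R : pzRingType) m (a : cube m) : chi R set0 a = 1.
Proof. exact: big_set0. Qed.

Lemma flipK m (o : option 'I_m) : involutive (flip o).
Proof. by move=> a; apply/ffunP => l; rewrite !ffunE addKb. Qed.

Lemma flip_None m (a : cube m) : flip None a = a.
Proof. by apply/ffunP => l; rewrite ffunE. Qed.

Lemma parity_flip m (S : {set 'I_m}) j a :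
  j \in S -> parity S (flip (Some j) a) = ~~ parity S a.
Proof.
move=> jS; rewrite /parity (bigD1 j) // [in RHS](bigD1 j) //= ffunE eqxx addNb.
congr (~~ (_ (+) _)); apply: eq_bigr => l /andP[_ lj].
by rewrite ffunE; case: eqP => // -[jl]; rewrite jl eqxx in lj.
Qed.

Lemma card_cube m : #|{: cube m}| = (2 ^ m)%N.
Proof. by rewrite card_ffun card_bool card_ord. Qed.

Lemma card_blocks n m : #|{: blocks n m}| = (2 ^ (n * m))%N.
Proof. by rewrite card_ffun card_cube card_ord -expnM mulnC. Qed.

Section CubeSums.
Variable R : numFieldType.

Lemma sum_cube1 m : \sum_(a : cube m) 1 = 2 ^+ m :> R.
Proof. by rewrite sumr_const card_cube natrX. Qed.

Lemma sum_chi_eq0 m (S : {set 'I_m}) : S != set0 -> \sum_(a : cube m) chi R S a = 0.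
Proof.
case/set0Pn => j jS; apply/eqP; rewrite -[_ == 0](@mulrn_eq0 _ _ 2) /=.
rewrite mulr2n {1}(reindex_inj (can_inj (flipK (Some j)))) -big_split /=.
by rewrite big1 // => a _; rewrite -!pm_parity parity_flip // pmE signrN -pmE addNr.
Qed.

Lemma sum_set_prod m (f : 'I_m -> R) :
  \sum_(S : {set 'I_m}) \prod_(j in S) f j = \prod_j (1 + f j).
Proof.
transitivity (\prod_j \sum_(b : bool) (if b then f j else 1)); last first.
  by apply: eq_bigr => j _; rewrite big_bool addrC.
rewrite bigA_distr_bigA /= (reindex (fun S : {set 'I_m} => [ffun j => j \in S])).
  apply: eq_bigr => S _; rewrite big_mkcond; apply: eq_bigr => j _.
  by rewrite ffunE.
exists (fun b : {ffun 'I_m -> bool} => [set j | b j]) => [S _ | b _].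
  by apply/setP => j; rewrite inE ffunE.
by apply/ffunP => j; rewrite ffunE inE.
Qed.

Lemma sum_chi_mul m (a a' : cube m) :
  \sum_(S : {set 'I_m}) chi R S a * chi R S a' = (a == a')%:R * 2 ^+ m.
Proof.
under eq_bigr => S _ do rewrite -big_split /=.
rewrite sum_set_prod; have [->|/eqP neq] := eqVneq a a'.
  by rewrite mul1r (eq_bigr (fun _ => 2)) ?prodr_const ?card_ord // => j _; rewrite pmK.
have [j ja] : exists j, a j != a' j.
  by apply/existsP; apply: contra_notT neq; rewrite negb_exists => /forallP eqa;
     apply/ffunP => j; apply/eqP; rewrite -[_ == _]negbK eqa.
rewrite mul0r (bigD1 j) //= -pm_addb.
by move: ja; rewrite -negb_add negbK => ->; rewrite subrr mul0r.
Qed.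

End CubeSums.

Definition setpair m1 m2 := ({set 'I_m1} * {set 'I_m2})%type.

Lemma card_setpair m1 m2 : #|{: setpair m1 m2}| = (2 ^ (m1 + m2))%N.
Proof.
by rewrite card_prod -!cardsT -!powersetT !card_powerset !cardsT !card_ord expnD.
Qed.

Section GadgetFourier.
Variables (R : numFieldType) (m1 m2 : nat) (g : gadget m1 m2).

Let N0 : (2 : R) ^+ (m1 + m2) != 0. Proof. by rewrite expf_neq0 // pnatr_eq0. Qed.

Lemma sum_gadget_chi S T :
  \sum_(a : cube m1) \sum_(b : cube m2) pm (g a b) * chi R S a * chi R T b
  = 2 ^+ (m1 + m2) * ghat g S T.
Proof. by rewrite /ghat mulrA mulfV ?mul1r. Qed.

Lemma pm_gadgetE a b :
  pm (g a b) = \sum_(p : setpair m1 m2) ghat g p.1 p.2 * chi R p.1 a * chi R p.2 b.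
Proof.
apply: (mulfI N0); symmetry.
rewrite -(pair_big xpredT xpredT (fun S T => ghat g S T * chi R S a * chi R T b)) /=.
rewrite mulr_sumr.
transitivity (\sum_S \sum_T \sum_(x : cube m1) \sum_(y : cube m2)
    pm (g x y) * chi R S x * chi R T y * (chi R S a * chi R T b)).
  apply: eq_bigr => S _; rewrite mulr_sumr; apply: eq_bigr => T _.
  have -> : 2 ^+ (m1 + m2) * (ghat g S T * chi R S a * chi R T b) =
             2 ^+ (m1 + m2) * ghat g S T * (chi R S a * chi R T b) by ring.
  rewrite -sum_gadget_chi mulr_suml; apply: eq_bigr => x _.
  by rewrite mulr_suml; apply: eq_bigr => y _; rewrite mulrA.
rewrite exchange_big2.
transitivity (\sum_(x : cube m1) (x == a)%:R * \sum_(y : cube m2) (y == b)%:R *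
    (2 ^+ (m1 + m2) * pm (g x y) : R)); last by rewrite !sumr_delta.
apply: eq_bigr => x _; rewrite mulr_sumr; apply: eq_bigr => y _.
transitivity (pm (g x y) * (\sum_S chi R S x * chi R S a) *
                           (\sum_T chi R T y * chi R T b)).
  rewrite -mulrA big_distrlr mulr_sumr /=; apply: eq_bigr => S _.
  by rewrite !mulr_sumr; apply: eq_bigr => T _; ring.
by rewrite !sum_chi_mul exprD; ring.
Qed.

Lemma parseval : \sum_(p : setpair m1 m2) ghat (R := R) g p.1 p.2 ^+ 2 = 1.
Proof.
apply: (mulfI N0); rewrite mulr1 mulr_sumr.
transitivity (\sum_(p : setpair m1 m2) \sum_(x : cube m1) \sum_(y : cube m2)
    ghat g p.1 p.2 * (pm (g x y) * chi R p.1 x * chi R p.2 y)).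
  apply: eq_bigr => p _; rewrite expr2 mulrCA -sum_gadget_chi mulr_sumr.
  by apply: eq_bigr => x _; rewrite mulr_sumr.
transitivity (\sum_(x : cube m1) \sum_(y : cube m2) pm (g x y) * pm (g x y) : R).
  rewrite exchange_big; apply: eq_bigr => x _; rewrite exchange_big.
  apply: eq_bigr => y _; rewrite [X in _ = _ * X]pm_gadgetE mulr_sumr.
  by apply: eq_bigr => p _; ring.
rewrite exprD -!sum_cube1 big_distrlr; apply: eq_bigr => x _.
by apply: eq_bigr => y _; rewrite pmK /= mulr1.
Qed.

End GadgetFourier.

Definition ghat_norm1 (R : numFieldType) m1 m2 (g : gadget m1 m2) : R :=
  \sum_(p : setpair m1 m2) `|ghat g p.1 p.2|.

Section GadgetSpectrum.
Variables (R : realFieldType) (m1 m2 : nat) (g : gadget m1 m2).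

Lemma ghat_norm1_gt0 : 0 < ghat_norm1 R g.
Proof.
have norm1_ge0 : 0 <= ghat_norm1 R g by apply: sumr_ge0 => p _; exact: normr_ge0.
rewrite lt_def norm1_ge0 andbT; apply/eqP => /psumr_eq0P ghat0.
have ghat_eq0 p : ghat (R := R) g p.1 p.2 = 0.
  by apply/normr0_eq0/ghat0 => // q _; exact: normr_ge0.
have := pm_gadgetE R g [ffun => false] [ffun => false].
rewrite big1 => [/eqP|p _]; first by rewrite pmE signr_eq0.
by rewrite ghat_eq0 !mul0r.
Qed.

Lemma ghat_norm1_sqr_le : ghat_norm1 R g ^+ 2 <= 2 ^+ (m1 + m2).
Proof.
apply: le_trans (sqr_sum_le _) _; rewrite card_setpair natrX.
under eq_bigr => p _ do rewrite real_normK ?num_real //.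
by rewrite parseval mulr1.
Qed.

Lemma ghat_max_sqr_ge (p : setpair m1 m2) :
  (forall q : setpair m1 m2, `|ghat (R := R) g q.1 q.2| <= `|ghat g p.1 p.2|) ->
  1 <= 2 ^+ (m1 + m2) * `|ghat (R := R) g p.1 p.2| ^+ 2.
Proof.
move=> p_max; rewrite -[X in X <= _](parseval R g).
apply: le_trans (_ : _ <= \sum_(q : setpair m1 m2) `|ghat (R := R) g p.1 p.2| ^+ 2) _.
  apply: ler_sum => q _; rewrite -real_normK ?num_real //.
  by rewrite lerXn2r ?nnegrE ?normr_ge0.
by rewrite sumr_const card_setpair -(mulr_natl _ (2 ^ (m1 + m2))) natrX.
Qed.

Lemma ghat_max_gt0 (p : setpair m1 m2) :
  (forall q : setpair m1 m2, `|ghat (R := R) g q.1 q.2| <= `|ghat g p.1 p.2|) ->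
  0 < `|ghat (R := R) g p.1 p.2|.
Proof.
move=> p_max; rewrite lt_def normr_ge0 andbT.
apply: contraTN (ghat_max_sqr_ge p_max) => /eqP ->.
by rewrite expr0n mulr0 ler10.
Qed.

End GadgetSpectrum.

Definition gblocks m1 m2 n (g : gadget m1 m2) (x : blocks n m1) (y : blocks n m2)
  : cube n := [ffun i => g (x i) (y i)].

Lemma gblocks_eqE m1 m2 n (g : gadget m1 m2) (x : blocks n m1) (y : blocks n m2)
    (z : cube n) :
  [forall i, g (x i) (y i) == z i] = (gblocks g x y == z).
Proof.
apply/forallP/eqP => [eq_gz | <- i]; last by rewrite ffunE.
by apply/ffunP => i; rewrite ffunE; apply/eqP.
Qed.

Section Fibers.
Variables (R : numFieldType) (m1 m2 n : nat) (g : gadget m1 m2).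
Hypothesis g_balanced : ghat (R := R) g set0 set0 = 0.

Lemma sum_gadget_eq (c : bool) :
  \sum_(a : cube m1) \sum_(b : cube m2) (g a b == c)%:R = 2 ^+ (m1 + m2) / 2 :> R.
Proof.
transitivity (\sum_(a : cube m1) \sum_(b : cube m2)
    (2^-1 + pm c / 2 * (pm (g a b) * chi R set0 a * chi R set0 b)) : R).
  by apply: eq_bigr => a _; apply: eq_bigr => b _; rewrite eqb_pm !chi_set0; field.
under eq_bigr => a _ do rewrite big_split -mulr_sumr /=.
rewrite big_split -mulr_sumr /= sum_gadget_chi g_balanced !mulr0 addr0.
by rewrite !sumr_const !card_cube -mulrnA -(mulr_natl _ (_ * _)) natrM !natrX exprD; field.
Qed.

Lemma card_fiber (z : cube n) :
  #|[set xy : blocks n m1 * blocks n m2 | [forall i, g (xy.1 i) (xy.2 i) == z i]]|%:R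
  = (2 ^+ (m1 + m2) / 2) ^+ n :> R.
Proof.
transitivity (\sum_(x : blocks n m1) \sum_(y : blocks n m2)
    \prod_i ((g (x i) (y i) == z i)%:R : R)).
  rewrite -sum1_card natr_sum big_mkcond pair_bigA /=.
  by apply: eq_bigr => -[x y] _; rewrite inE -natr_forall; case: ifP.
rewrite (sum_ffun2_prod (fun i a b => ((g a b == z i)%:R : R))).
by under eq_bigr => i _ do rewrite sum_gadget_eq; rewrite prodr_const card_ord.
Qed.

Lemma fhat_fiber (C : rproto R (blocks n m1) (blocks n m2)) (I : {set 'I_n}) :
  fhat (fiber g C) I = (2 ^+ (n * (m1 + m2)))^-1 *
    \sum_(x : blocks n m1) \sum_(y : blocks n m2)
       rval C x y * \prod_(i in I) pm (g (x i) (y i)).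
Proof.
rewrite /fhat /fiber; under eq_bigr => z _ do rewrite card_fiber.
transitivity ((2 ^+ n * (2 ^+ (m1 + m2) / 2) ^+ n)^-1 *
   \sum_z \sum_(x : blocks n m1) \sum_(y : blocks n m2)
      (z == gblocks g x y)%:R * (rval C x y * \prod_(i in I) pm (z i))).
  rewrite invfM -mulrA [in RHS]mulr_sumr; congr (_ * _); apply: eq_bigr => z _.
  rewrite mulrAC mulrC; congr (_ * _); rewrite mulr_suml; apply: eq_bigr => x _.
  rewrite big_mkcond mulr_suml; apply: eq_bigr => y _.
  by rewrite gblocks_eqE eq_sym; case: eqP; rewrite ?mul1r ?mul0r.
rewrite exchange_big /=; congr (_ * _).
  by rewrite -exprMn mulrCA divff ?pnatr_eq0 // mulr1 -exprM mulnC.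
apply: eq_bigr => x _; rewrite exchange_big /=; apply: eq_bigr => y _.
rewrite sumr_delta; congr (_ * _); apply: eq_bigr => i _.
by rewrite ffunE.
Qed.

End Fibers.

Fixpoint proto_map (X Y X' Y' : Type) (al : X' -> X) (be : Y' -> Y) (p : proto X Y)
  : proto X' Y' :=
  match p with
  | PLeaf b => PLeaf X' Y' b
  | PAlice f p0 p1 => PAlice (f \o al) (proto_map al be p0) (proto_map al be p1)
  | PBob f p0 p1 => PBob (f \o be) (proto_map al be p0) (proto_map al be p1)
  end.

Lemma peval_map X Y X' Y' (al : X' -> X) (be : Y' -> Y) p x y :
  peval (proto_map al be p) x y = peval p (al x) (be y).
Proof. by elim: p => [b|f p0 IH0 p1 IH1|f p0 IH0 p1 IH1] //=; rewrite IH0 IH1. Qed.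

Lemma pdepth_map X Y X' Y' (al : X' -> X) (be : Y' -> Y) p :
  pdepth (proto_map al be p) = pdepth p.
Proof. by elim: p => [b|f p0 IH0 p1 IH1|f p0 IH0 p1 IH1] //=; rewrite IH0 IH1. Qed.

Lemma normr_rval_le1 (R : numDomainType) X Y d (C : rproto R X Y) x y :
  rproto_ok d C -> `|rval C x y| <= 1.
Proof.
case=> C_ok <-; rewrite /rval; elim: C C_ok => [|w C IH] /=.
  by rewrite !big_nil normr0.
case/andP=> /andP[w_ge0 _] C_ok; rewrite !big_cons (le_trans (ler_normD _ _)) //.
by rewrite lerD ?IH // normrM normr_pm mulr1 ger0_norm.
Qed.

Section PublicCoin.
Variables (R : numFieldType) (X Y X' Y' : Type) (Th : finType).
Variables (al : Th -> X' -> X) (be : Th -> Y' -> Y).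

Definition rproto_mix (C : rproto R X Y) : rproto R X' Y' :=
  [seq (w.1 / #|Th|%:R, proto_map (al t) (be t) w.2) | w <- C, t <- enum Th].

Lemma rval_mix C x y :
  rval (rproto_mix C) x y = #|Th|%:R^-1 * \sum_t rval C (al t x) (be t y).
Proof.
rewrite /rval /rproto_mix big_allpairs_dep /= mulr_sumr exchange_big /= big_enum /=.
apply: eq_bigr => t _; rewrite mulr_sumr; apply: eq_bigr => w _.
by rewrite peval_map mulrCA mulrA.
Qed.

Lemma rproto_ok_mix d C : (0 < #|Th|)%N -> rproto_ok d C -> rproto_ok d (rproto_mix C).
Proof.
move=> Th_gt0 [C_ok C_sum]; split.
  elim: C C_ok {C_sum} => [|w C IH] //= /andP[/andP[w_ge0 w_d] C_ok].
  rewrite all_cat IH // andbT all_map; apply/allP => t _ /=.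
  by rewrite pdepth_map w_d andbT divr_ge0.
rewrite -[RHS]C_sum /rproto_mix big_allpairs_dep /=; apply: eq_bigr => w _.
by rewrite big_enum /= sumr_const -(mulr_natr (w.1 / _)) divfK // pnatr_eq0 -lt0n.
Qed.

End PublicCoin.

Definition encode m (S : {set 'I_m}) (b : bool) (t : cube m) : cube m :=
  flip (if b (+) parity S t then [pick j in S] else None) t.

Lemma parity_encode m (S : {set 'I_m}) b t : S != set0 -> parity S (encode S b t) = b.
Proof.
case/set0Pn => j0 j0S; rewrite /encode.
case: pickP => [j jS | /(_ j0)]; last by rewrite j0S.
by case: b; case pS: (parity S t); rewrite /= ?flip_None ?parity_flip ?pS.
Qed.

Section BlockEncoding.
Variables (n m : nat) (S : 'I_n -> {set 'I_m}).

Definition flips (r : cube n) (th : blocks n m) : blocks n m :=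
  [ffun i => flip (if r i then [pick j in S i] else None) (th i)].

Definition encodes (u : cube n) (th : blocks n m) : blocks n m :=
  [ffun i => encode (S i) (u i) (th i)].

Lemma flipsK r : involutive (flips r).
Proof. by move=> th; apply/ffunP => i; rewrite !ffunE flipK. Qed.

Lemma sum_encodes (R : pzSemiRingType) (K : blocks n m -> R) :
  \sum_(th : blocks n m) \sum_(u : cube n) K (encodes u th) = 2 ^+ n * \sum_x K x.
Proof.
transitivity (\sum_(th : blocks n m) \sum_(r : cube n) K (flips r th)).
  apply: eq_bigr => th _.
  pose shift (u : cube n) : cube n := [ffun i => u i (+) parity (S i) (th i)].
  have shiftK : involutive shift by move=> u; apply/ffunP => i; rewrite !ffunE addbK.
  rewrite (reindex_inj (inv_inj shiftK)); apply: eq_bigr => u _; congr K.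
  by apply/ffunP => i; rewrite !ffunE /encode addbK.
rewrite exchange_big /=.
under eq_bigr => r _ do rewrite (reindex_inj (inv_inj (flipsK r))) /=.
under eq_bigr => r _ do under eq_bigr => th _ do rewrite flipsK.
by rewrite sumr_const card_cube -(mulr_natl (\sum_x K x)) natrX.
Qed.

End BlockEncoding.

Definition parities n m (S : {set 'I_m}) (x : blocks n m) : cube n :=
  [ffun i => parity S (x i)].

Lemma sum_parity_eq (R : numFieldType) m (S : {set 'I_m}) (c : bool) : S != set0 ->
  \sum_(a : cube m) (c == parity S a)%:R = 2 ^+ m / 2 :> R.
Proof.
move=> S0; under eq_bigr => a _ do rewrite eqb_pm pm_parity mulrDl.
by rewrite big_split /= -!mulr_suml -mulr_sumr sum_chi_eq0 // mulr0 mul0r addr0 sum_cube1.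
Qed.

Section GadgetParities.
Variables (R : numFieldType) (m1 m2 : nat) (g : gadget m1 m2).
Variables (S : {set 'I_m1}) (T : {set 'I_m2}).
Hypotheses (S0 : S != set0) (T0 : T != set0).
Hypotheses (g00 : ghat (R := R) g set0 set0 = 0) (gS0 : ghat (R := R) g S set0 = 0)
  (g0T : ghat (R := R) g set0 T = 0).

Lemma sum_parities (c e : bool) :
  \sum_(a : cube m1) \sum_(b : cube m2) (c == parity S a)%:R * (e == parity T b)%:R
  = 2 ^+ (m1 + m2) / 4 :> R.
Proof.
by rewrite -big_distrlr /= !sum_parity_eq // exprD; field.
Qed.

Lemma sum_gadget_parities (c e : bool) :
  \sum_(a : cube m1) \sum_(b : cube m2)
     (c == parity S a)%:R * (e == parity T b)%:R * pm (g a b)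
  = 2 ^+ (m1 + m2) / 4 * (pm c * pm e * ghat (R := R) g S T).
Proof.
transitivity (\sum_(a : cube m1) \sum_(b : cube m2)
   (4^-1 * (pm (g a b) * chi R set0 a * chi R set0 b)
   + pm c / 4 * (pm (g a b) * chi R S a * chi R set0 b)
   + pm e / 4 * (pm (g a b) * chi R set0 a * chi R T b)
   + pm c * pm e / 4 * (pm (g a b) * chi R S a * chi R T b))).
  apply: eq_bigr => a _; apply: eq_bigr => b _.
  by rewrite !eqb_pm !pm_parity !chi_set0; field.
under eq_bigr => a _ do rewrite !big_split -!mulr_sumr /=.
by rewrite !big_split -!mulr_sumr /= !sum_gadget_chi g00 gS0 g0T; field.
Qed.

Lemma sum_gadget_blocks_parities n (K : cube n -> cube n -> R) (J : {set 'I_n}) :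
  \sum_(x : blocks n m1) \sum_(y : blocks n m2)
     K (parities S x) (parities T y) * \prod_(i in J) pm (g (x i) (y i))
  = (2 ^+ (m1 + m2) / 4) ^+ n * ghat (R := R) g S T ^+ #|J| *
     \sum_(u : cube n) \sum_(v : cube n) K u v * \prod_(i in J) (pm (u i) * pm (v i)).
Proof.
pose F (u v : cube n) i (a : cube m1) (b : cube m2) : R :=
  (u i == parity S a)%:R * (v i == parity T b)%:R * (if i \in J then pm (g a b) else 1).
transitivity (\sum_(x : blocks n m1) \sum_(y : blocks n m2) \sum_(u : cube n)
    \sum_(v : cube n) K u v * \prod_i F u v i (x i) (y i)).
  apply: eq_bigr => x _; apply: eq_bigr => y _.
  transitivity (\sum_(u : cube n) (u == parities S x)%:R * \sum_(v : cube n)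
      (v == parities T y)%:R * (K u v * \prod_(i in J) pm (g (x i) (y i)))).
    by rewrite !sumr_delta.
  apply: eq_bigr => u _; rewrite mulr_sumr; apply: eq_bigr => v _.
  by rewrite /F !big_split /= -big_mkcond /= !natr_eq_ffun; ring.
rewrite exchange_big2 mulr_sumr; apply: eq_bigr => u _.
rewrite mulr_sumr; apply: eq_bigr => v _.
transitivity (K u v * \sum_(x : blocks n m1) \sum_(y : blocks n m2)
    \prod_i F u v i (x i) (y i)).
  by rewrite mulr_sumr; apply: eq_bigr => x _; rewrite mulr_sumr.
rewrite sum_ffun2_prod.
rewrite (eq_bigr (fun i => 2 ^+ (m1 + m2) / 4 *
   (if i \in J then pm (u i) * pm (v i) * ghat (R := R) g S T else 1))); last first.
  move=> i _; rewrite /F; case: (i \in J) => /=; first exact: sum_gadget_parities.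
  rewrite mulr1 -(sum_parities (u i) (v i)).
  by apply: eq_bigr => a _; apply: eq_bigr => b _; rewrite mulr1.
rewrite big_split /= prodr_const card_ord -big_mkcond /= big_split /= prodr_const.
ring.
Qed.

End GadgetParities.

Section SpectralDecomposition.
Variables (R : numFieldType) (m1 m2 n : nat) (g : gadget m1 m2).
Local Notation W := (ghat_norm1 R g).
Hypothesis W_gt0 : 0 < W.

Definition spectral_weight (tau : {ffun 'I_n -> setpair m1 m2}) : R :=
  \prod_i (`|ghat g (tau i).1 (tau i).2| / W).

Definition char_corr (H : blocks n m1 -> blocks n m2 -> R)
    (tau : {ffun 'I_n -> setpair m1 m2}) (I : {set 'I_n}) : R :=
  \sum_(x : blocks n m1) \sum_(y : blocks n m2)
     H x y * \prod_(i in I) (chi R (tau i).1 (x i) * chi R (tau i).2 (y i)).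

Lemma spectral_weight_ge0 tau : 0 <= spectral_weight tau.
Proof. by apply: prodr_ge0 => i _; rewrite divr_ge0 // ltW. Qed.

Lemma sum_spectral_weight : \sum_tau spectral_weight tau = 1.
Proof.
rewrite /spectral_weight -(bigA_distr_bigA (fun _ p => `|ghat g p.1 p.2| / W)) /=.
by rewrite big1 // => i _; rewrite -mulr_suml mulfV // gt_eqF.
Qed.

Lemma spectral_weight_neq0 tau :
  (forall S T, (S == set0) || (T == set0) -> ghat (R := R) g S T = 0) ->
  spectral_weight tau != 0 -> forall i, ((tau i).1 != set0) && ((tau i).2 != set0).
Proof.
move=> g_vanish /prodf_neq0 w_neq0 i; rewrite -negb_or.
by apply: contraNN (w_neq0 i isT) => /g_vanish ->; rewrite normr0 mul0r.
Qed.

(* Off I the factor |ghat| / W, which sums to 1, makes the weights a product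
   distribution over all of 'I_n. *)
Let coef (I : {set 'I_n}) (tau : {ffun 'I_n -> setpair m1 m2}) : R :=
  \prod_i (if i \in I then ghat g (tau i).1 (tau i).2
           else `|ghat g (tau i).1 (tau i).2| / W).

Let normr_coef I tau : `|coef I tau| = W ^+ #|I| * spectral_weight tau.
Proof.
rewrite normr_prod -(prodr_const (mem I)) [X in X * _]big_mkcond -big_split /=.
apply: eq_bigr => i _; case: (i \in I); first by rewrite mulrC divfK // gt_eqF.
by rewrite mul1r ger0_norm // divr_ge0 // ltW.
Qed.

Let prod_pm_gadget_expand (I : {set 'I_n}) (x : blocks n m1) (y : blocks n m2) :
  \prod_(i in I) pm (g (x i) (y i)) =
  \sum_tau coef I tau * \prod_(i in I) (chi R (tau i).1 (x i) * chi R (tau i).2 (y i)).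
Proof.
pose F i (p : setpair m1 m2) : R := if i \in I
  then ghat g p.1 p.2 * (chi R p.1 (x i) * chi R p.2 (y i))
  else `|ghat g p.1 p.2| / W.
transitivity (\prod_i \sum_p F i p).
  rewrite big_mkcond /=; apply: eq_bigr => i _; rewrite /F.
  case: (i \in I); last by rewrite -mulr_suml mulfV // gt_eqF.
  by rewrite pm_gadgetE; apply: eq_bigr => p _; rewrite mulrA.
rewrite bigA_distr_bigA; apply: eq_bigr => tau _ /=.
rewrite /coef [X in _ * X]big_mkcond -big_split /=; apply: eq_bigr => i _.
by rewrite /F; case: (i \in I); rewrite ?mulr1.
Qed.

Lemma normr_sum_gadget_blocks_le (H : blocks n m1 -> blocks n m2 -> R) (I : {set 'I_n}) :
  `|\sum_(x : blocks n m1) \sum_(y : blocks n m2) H x y * \prod_(i in I) pm (g (x i) (y i))|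
  <= W ^+ #|I| * \sum_tau spectral_weight tau * `|char_corr H tau I|.
Proof.
have -> : \sum_(x : blocks n m1) \sum_(y : blocks n m2)
    H x y * \prod_(i in I) pm (g (x i) (y i)) = \sum_tau coef I tau * char_corr H tau I.
  rewrite /char_corr; under eq_bigr => x _ do under eq_bigr => y _ do
    rewrite prod_pm_gadget_expand mulr_sumr.
  under eq_bigr => x _ do rewrite exchange_big /=.
  rewrite exchange_big /=; apply: eq_bigr => tau _; rewrite mulr_sumr.
  by apply: eq_bigr => x _; rewrite mulr_sumr; apply: eq_bigr => y _; ring.
apply: le_trans (ler_norm_sum _ _ _) _; rewrite mulr_sumr; apply: ler_sum => tau _.
by rewrite normrM normr_coef mulrA.
Qed.

End SpectralDecomposition.

Section Reduction.
Variables (R : numFieldType) (m1 m2 m1' m2' n : nat) (g' : gadget m1' m2').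
Variables (S' : {set 'I_m1'}) (T' : {set 'I_m2'}).
Variable tau : {ffun 'I_n -> setpair m1 m2}.

Definition reduction_alice (th : blocks n m1 * blocks n m2) (x : blocks n m1')
  : blocks n m1 := encodes (fun i => (tau i).1) (parities S' x) th.1.

Definition reduction_bob (th : blocks n m1 * blocks n m2) (y : blocks n m2')
  : blocks n m2 := encodes (fun i => (tau i).2) (parities T' y) th.2.

Definition reduce (C : rproto R (blocks n m1) (blocks n m2)) :=
  rproto_mix reduction_alice reduction_bob C.

Definition rval_encoded (C : rproto R (blocks n m1) (blocks n m2)) (u v : cube n) : R :=
  (2 ^+ (n * (m1 + m2)))^-1 * \sum_(th : blocks n m1 * blocks n m2)
     rval C (encodes (fun i => (tau i).1) u th.1) (encodes (fun i => (tau i).2) v th.2).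

Lemma rval_reduce C x y :
  rval (reduce C) x y = rval_encoded C (parities S' x) (parities T' y).
Proof.
by rewrite rval_mix card_prod !card_blocks -expnD -mulnDr natrX.
Qed.

Hypothesis tau_nonempty : forall i, ((tau i).1 != set0) && ((tau i).2 != set0).

Lemma sum_rval_encoded C (J : {set 'I_n}) :
  \sum_(u : cube n) \sum_(v : cube n)
     rval_encoded C u v * \prod_(i in J) (pm (u i) * pm (v i))
  = 4 ^+ n / 2 ^+ (n * (m1 + m2)) * char_corr (rval C) tau J.
Proof.
pose H x y := rval C x y * \prod_(i in J) (chi R (tau i).1 (x i) * chi R (tau i).2 (y i)).
transitivity ((2 ^+ (n * (m1 + m2)))^-1 * \sum_(u : cube n) \sum_(v : cube n)
    \sum_(t1 : blocks n m1) \sum_(t2 : blocks n m2)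
      H (encodes (fun i => (tau i).1) u t1) (encodes (fun i => (tau i).2) v t2)).
  rewrite mulr_sumr; apply: eq_bigr => u _; rewrite mulr_sumr; apply: eq_bigr => v _.
  rewrite [in RHS]pair_bigA /= -mulrA mulr_suml; congr (_ * _).
  apply: eq_bigr => th _; congr (_ * _); apply: eq_bigr => i _.
  have /andP[tau1 tau2] := tau_nonempty i.
  by rewrite !ffunE -!pm_parity !parity_encode.
rewrite exchange_big2; under eq_bigr => t1 _ do rewrite exchange_big /=.
rewrite (sum_encodes _ (fun x => \sum_t2 \sum_v
    H x (encodes (fun i => (tau i).2) v t2))).
under eq_bigr => x _ do rewrite (sum_encodes _ (H x)).
have -> : 4 ^+ n = 2 ^+ n * 2 ^+ n :> R by rewrite -exprMn -natrM.
by rewrite -mulr_sumr /char_corr -/H; ring.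
Qed.

Hypotheses (S'0 : S' != set0) (T'0 : T' != set0).
Hypotheses (g'00 : ghat (R := R) g' set0 set0 = 0) (g'S0 : ghat (R := R) g' S' set0 = 0)
  (g'0T : ghat (R := R) g' set0 T' = 0).

Lemma fhat_fiber_reduce C (J : {set 'I_n}) :
  fhat (fiber g' (reduce C)) J =
  (2 ^+ (n * (m1 + m2)))^-1 * ghat (R := R) g' S' T' ^+ #|J| * char_corr (rval C) tau J.
Proof.
rewrite fhat_fiber //.
under eq_bigr => x _ do under eq_bigr => y _ do rewrite rval_reduce.
rewrite sum_gadget_blocks_parities // sum_rval_encoded.
rewrite [in LHS]mulnC exprM exprMn exprVn; field.
by rewrite !expf_neq0 // pnatr_eq0.
Qed.

End Reduction.

Lemma rproto_ok_leaf (R : numDomainType) X Y d (b : bool) :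
  rproto_ok d ([:: (1, PLeaf X Y b)] : rproto R X Y).
Proof. by split; rewrite ?big_seq1 //= ler01. Qed.

Section FiberBounds.
Variables (R : numFieldType) (m1 m2 n : nat) (g : gadget m1 m2).
Hypothesis g_balanced : ghat (R := R) g set0 set0 = 0.

Lemma normr_fhat_fiber_le1 d (C : rproto R (blocks n m1) (blocks n m2)) (I : {set 'I_n}) :
  rproto_ok d C -> `|fhat (fiber g C) I| <= 1.
Proof.
move=> C_ok; rewrite fhat_fiber // normrM ger0_norm ?invr_ge0 ?exprn_ge0 ?ler0n //.
rewrite ler_pdivrMl ?exprn_gt0 ?ltr0n // mulr1.
have -> : 2 ^+ (n * (m1 + m2)) = \sum_(x : blocks n m1) \sum_(y : blocks n m2) 1 :> R.
  by rewrite !sumr_const !card_blocks -mulrnA -expnD -mulnDr addnC natrX.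
apply: le_trans (ler_norm_sum _ _ _) _; apply: ler_sum => x _.
apply: le_trans (ler_norm_sum _ _ _) _; apply: ler_sum => y _.
rewrite normrM normr_prod (eq_bigr (fun _ => 1)) => [|i _]; last exact: normr_pm.
by rewrite big1_eq mulr1 (normr_rval_le1 _ _ C_ok).
Qed.

Lemma L1k_fiber_le d (C : rproto R (blocks n m1) (blocks n m2)) k :
  rproto_ok d C -> L1k k (fiber g C) <= \sum_(I : {set 'I_n} | #|I| == k) 1.
Proof. by move=> C_ok; apply: ler_sum => I _; exact: normr_fhat_fiber_le1 C_ok. Qed.

Lemma L1k_fiber_le_weighted (C : rproto R (blocks n m1) (blocks n m2)) k :
  0 < ghat_norm1 R g ->
  L1k k (fiber g C) <= ghat_norm1 R g ^+ k *
    \sum_(tau : {ffun 'I_n -> setpair m1 m2}) spectral_weight R g tau *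
      ((2 ^+ (n * (m1 + m2)))^-1 *
       \sum_(J : {set 'I_n} | #|J| == k) `|char_corr (rval C) tau J|).
Proof.
move=> W_gt0; set c : R := (2 ^+ (n * (m1 + m2)))^-1.
have c_ge0 : 0 <= c by rewrite invr_ge0 exprn_ge0 ?ler0n.
have -> : ghat_norm1 R g ^+ k * \sum_tau spectral_weight R g tau *
    (c * \sum_(J : {set 'I_n} | #|J| == k) `|char_corr (rval C) tau J|) =
    \sum_(J : {set 'I_n} | #|J| == k) c * (ghat_norm1 R g ^+ k *
      \sum_tau spectral_weight R g tau * `|char_corr (rval C) tau J|).
  rewrite mulr_sumr; under eq_bigr => tau _ do rewrite !mulr_sumr.
  rewrite exchange_big /=; apply: eq_bigr => J _; rewrite !mulr_sumr.
  by apply: eq_bigr => tau _; ring.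
apply: ler_sum => J /eqP <-; rewrite fhat_fiber // -/c normrM (ger0_norm c_ge0).
by rewrite ler_wpM2l ?normr_sum_gadget_blocks_le.
Qed.

End FiberBounds.

Section Supremum.
Variables (R : realType) (m1 m2 n : nat) (g : gadget m1 m2) (d k : nat).
Hypothesis g_balanced : ghat (R := R) g set0 set0 = 0.

Lemma L1k_sup_ub (C : rproto R (blocks n m1) (blocks n m2)) :
  rproto_ok d C -> L1k k (fiber g C) <= L1k_sup g d n k.
Proof.
move=> C_ok; apply: ub_le_sup; last by exists C.
exists (\sum_(I : {set 'I_n} | #|I| == k) 1) => _ [C' [C'_ok ->]].
exact: L1k_fiber_le C'_ok.
Qed.

Lemma L1k_sup_ge0 : 0 <= L1k_sup (R := R) g d n k.
Proof.
apply: le_trans (L1k_sup_ub (rproto_ok_leaf _ _ _ d false)).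
by apply: sumr_ge0 => I _; exact: normr_ge0.
Qed.

End Supremum.

Section Comparison.
Variables (R : realType) (m1 m2 m1' m2' : nat) (g : gadget m1 m2) (g' : gadget m1' m2').
Hypothesis g_vanish : forall S T, (S == set0) || (T == set0) -> ghat (R := R) g S T = 0.
Hypothesis g'_vanish : forall S T, (S == set0) || (T == set0) -> ghat (R := R) g' S T = 0.
Variables (d n k : nat) (p : setpair m1' m2').
Hypothesis p_max : forall q : setpair m1' m2',
  `|ghat (R := R) g' q.1 q.2| <= `|ghat (R := R) g' p.1 p.2|.
Local Notation a := `|ghat (R := R) g' p.1 p.2|.

Lemma ghat_max_nonempty : (p.1 != set0) && (p.2 != set0).
Proof.
rewrite -negb_or; apply: contraTN (ghat_max_gt0 p_max) => /g'_vanish ->.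
by rewrite normr0 ltxx.
Qed.

Lemma char_corr_le_L1k_sup (C : rproto R (blocks n m1) (blocks n m2))
    (tau : {ffun 'I_n -> setpair m1 m2}) :
  rproto_ok d C -> (forall i, ((tau i).1 != set0) && ((tau i).2 != set0)) ->
  (2 ^+ (n * (m1 + m2)))^-1 *
    \sum_(J : {set 'I_n} | #|J| == k) `|char_corr (rval C) tau J|
  <= a ^- k * L1k_sup g' d n k.
Proof.
move=> C_ok tau_ne; have /andP[p1_ne p2_ne] := ghat_max_nonempty.
have g'00 : ghat (R := R) g' set0 set0 = 0 by rewrite g'_vanish ?eqxx.
have g'p0 : ghat (R := R) g' p.1 set0 = 0 by rewrite g'_vanish ?eqxx ?orbT.
have g'0p : ghat (R := R) g' set0 p.2 = 0 by rewrite g'_vanish ?eqxx.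
have reduce_ok : rproto_ok d (reduce p.1 p.2 tau C).
  apply: rproto_ok_mix C_ok; apply/card_gt0P.
  by exists ([ffun=> [ffun=> false]], [ffun=> [ffun=> false]]).
rewrite ler_pdivlMl ?exprn_gt0 ?(ghat_max_gt0 p_max) //.
have -> : a ^+ k * ((2 ^+ (n * (m1 + m2)))^-1 *
    \sum_(J : {set 'I_n} | #|J| == k) `|char_corr (rval C) tau J|) =
    L1k k (fiber g' (reduce p.1 p.2 tau C)).
  rewrite /L1k !mulr_sumr; apply: eq_bigr => J /eqP <-.
  rewrite (fhat_fiber_reduce tau_ne p1_ne p2_ne g'00 g'p0 g'0p).
  rewrite [RHS]normrM [in RHS]normrM normrX [`|_^-1|]ger0_norm; first by ring.
  by rewrite invr_ge0 exprn_ge0 ?ler0n.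
exact: L1k_sup_ub.
Qed.

Lemma L1k_fiber_le_ratio (C : rproto R (blocks n m1) (blocks n m2)) :
  rproto_ok d C -> L1k k (fiber g C) <= ghat_norm1 R g ^+ k * (a ^- k * L1k_sup g' d n k).
Proof.
move=> C_ok; have W_gt0 := ghat_norm1_gt0 R g.
have g00 : ghat (R := R) g set0 set0 = 0 by rewrite g_vanish ?eqxx.
apply: le_trans (L1k_fiber_le_weighted g00 C k W_gt0) _.
apply: ler_wpM2l; first by rewrite exprn_ge0 // ltW.
apply: le_trans (_ : _ <= \sum_tau spectral_weight R g tau * (a ^- k * L1k_sup g' d n k)) _.
  apply: ler_sum => tau _.
  have [->|w_neq0] := eqVneq (spectral_weight R g tau) 0; first by rewrite !mul0r.
  apply: ler_wpM2l; first exact: spectral_weight_ge0.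
  by apply: char_corr_le_L1k_sup => //; exact: (spectral_weight_neq0 g_vanish w_neq0).
by rewrite -mulr_suml sum_spectral_weight ?mul1r.
Qed.

Lemma L1k_sup_le_ratio : L1k_sup g d n k <= (ghat_norm1 R g / a) ^+ k * L1k_sup g' d n k.
Proof.
apply: ge_sup => [|_ [C [C_ok ->]]]; last first.
  by rewrite exprMn exprVn -mulrA; exact: L1k_fiber_le_ratio.
pose C0 : rproto R (blocks n m1) (blocks n m2) := [:: (1, PLeaf _ _ false)].
by exists (L1k k (fiber g C0)), C0; split => //; exact: rproto_ok_leaf.
Qed.

End Comparison.

Theorem corollary7p7 (R : realType) (m1 m2 m1' m2' : nat)
  (g : gadget m1 m2) (g' : gadget m1' m2') :
  (forall (S : {set 'I_m1}) (T : {set 'I_m2}),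
      (S == set0) || (T == set0) -> ghat (R := R) g S T = 0) ->
  (forall (S : {set 'I_m1'}) (T : {set 'I_m2'}),
      (S == set0) || (T == set0) -> ghat (R := R) g' S T = 0) ->
  forall k d n : nat,
    L1k_sup (R := R) g d n k <=
    Num.sqrt (2 ^+ ((m1 + m2 + m1' + m2') * k)) * L1k_sup (R := R) g' d n k.
Proof.
move=> g_vanish g'_vanish k d n.
have [p _ /(_ _ isT) p_max] := arg_maxP (fun q : setpair m1' m2' =>
  `|ghat (R := R) g' q.1 q.2|) (isT : xpredT (set0, set0)).
apply: le_trans (L1k_sup_le_ratio g_vanish g'_vanish d n k p_max) _.
have g'00 : ghat (R := R) g' set0 set0 = 0 by rewrite g'_vanish ?eqxx.
apply: ler_wpM2r; first exact: L1k_sup_ge0.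
rewrite -addnA; apply: expr_div_le_sqrt.
- exact: ltW (ghat_norm1_gt0 R g).
- exact: ghat_max_gt0 p_max.
- exact: ghat_norm1_sqr_le.
- exact: ghat_max_sqr_ge.
Qed.
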